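(* Let $F$ be a field of characteristic $p>0$, $L$ a Lie algebra over $F$ and $A$ an associative enveloping algebra of $L$ (so $L\subseteq A^{(-)}$). Put $\tilde L=L\otimes_FE\subseteq\tilde A=A\otimes_FE$. If $a\in\tilde L$ is a sandwich of $\tilde L$, then $[a,b]^p=0$ in $\tilde A$ for every $b\in\tilde L$.
   Context: $A^{(-)}$ is $A$ with the commutator bracket $[x,y]=xy-yx$. $E$ is the commutative associative $F$-algebra without unit generated by $e_1,e_2,\dots$ with relations $e_i^2=0$; $\tilde A=A\otimes_FE$ and $\tilde L=L\otimes_FE$. An element $a$ of a Lie algebra $M$ is a sandwich if $\operatorname{ad}(a)^2=0$ and $\operatorname{ad}(a)\operatorname{ad}(c)\operatorname{ad}(a)=0$ for all $c\in M$, where $\operatorname{ad}(a):x\mapsto[x,a]$. *)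

From HB Require Import structures.
From mathcomp Require Import all_boot all_order all_algebra.
From mathcomp Require Import finmap.
Set Implicit Arguments. Unset Strict Implicit. Unset Printing Implicit Defensive.
Import Order.TTheory GRing.Theory.
Local Open Scope fset_scope.
Local Open Scope ring_scope.

(* E = commutative associative algebra without unit generated by e_1,e_2,...
   with e_i^2 = 0.  It has the F-basis e_S, S a nonempty finite set of
   indices, with e_S e_T = e_(S u T) if S, T are disjoint and 0 otherwise.
   Hence an element of A (x)_F E is uniquely  sum_S a_S (x) e_S  (finitely
   many nonzero a_S, S nonempty), which we represent as the coefficient
   function S |-> a_S.  *)

Definition tens (A : Type) := {fset nat} -> A.

Section Tensor.
Variables (F : fieldType) (A : algType F).

Definition in_tA (x : tens A) : Prop :=
  x fset0 = 0 /\ exists s : {fset {fset nat}}, forall S, S \notin s -> x S = 0.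

Definition in_tL (L : {pred A}) (x : tens A) : Prop :=
  in_tA x /\ forall S, x S \in L.

(* (sum a_S e_S)(sum b_T e_T) = sum_U (sum_{S u T = U, S,T disjoint} a_S b_T) e_U *)
Definition tmul (x y : tens A) : tens A := fun U =>
  \sum_(S <- fpowerset U | (S != fset0) && (S != U)) x S * y (U `\` S).

Definition tsub (x y : tens A) : tens A := fun U => x U - y U.

Definition tbr (x y : tens A) : tens A := tsub (tmul x y) (tmul y x).

(* texpS x n = x ^ (n+1) in the non-unital algebra A~ *)
Fixpoint texpS (x : tens A) (n : nat) : tens A :=
  match n with 0 => x | n'.+1 => tmul x (texpS x n') end.

Definition tis0 (x : tens A) : Prop := forall U, x U = 0.

(* a is a sandwich of the Lie algebra L~ = L (x) E (bracket = commutator),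
   with ad(a) : x |-> [x, a] :
   ad(a)^2 = 0 and ad(a) ad(c) ad(a) = 0 for all c in L~. *)
Definition tsandwich (L : {pred A}) (a : tens A) : Prop :=
  (forall x, in_tL L x -> tis0 (tbr (tbr x a) a)) /\
  (forall c x, in_tL L c -> in_tL L x -> tis0 (tbr (tbr (tbr x a) c) a)).

End Tensor.

Definition lie_subalg (F : fieldType) (A : algType F) (L : {pred A}) : Prop :=
  GRing.submod_closed L /\ forall x y, x \in L -> y \in L -> x * y - y * x \in L.

From HB Require Import structures.
From mathcomp Require Import all_boot all_order all_algebra.
From mathcomp Require Import finmap.
From mathcomp Require Import boolp.
Set Implicit Arguments. Unset Strict Implicit. Unset Printing Implicit Defensive.
Import Order.TTheory GRing.Theory.
Local Open Scope fset_scope.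
Local Open Scope ring_scope.

(* Adjoining a unit to A (x) E makes every e_T central, with e_T^2 = 0 for T
   nonempty.  Write b = sum_T b_T e_T with b_T in L.  Applying the two sandwich
   identities to b_T e_i and b_T' e_j, where e_i, e_j are generators not
   occurring in a, and cancelling e_i and e_j gives [[b_T, a], a] = 0 and
   [[[b_T, a], b_T'], a] = 0.  As [b_T, a] commutes with a, these say that the
   elements [a, b_T] commute pairwise.  So [a, b] = sum_T [a, b_T] e_T is a sum
   of pairwise commuting elements with vanishing p-th powers, and the Frobenius
   map is additive on commuting elements in characteristic p. *)

Lemma big_seq_only (M : nmodType) (I : eqType) (r : seq I) (i : I) (F : I -> M) :
  uniq r -> i \in r -> (forall j, j \in r -> j != i -> F j = 0) ->
  \sum_(j <- r) F j = F i.
Proof.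
by move=> ur ir F0; rewrite (bigD1_seq i) //= big1_seq ?addr0 // => j /andP[/F0].
Qed.

Ltac fset_solve :=
  (apply/fsetP => k || (apply/fsubsetP => k; apply/implyP));
  repeat match goal with H : is_true (_ `<=` _) |- _ => move/fsubsetP/(_ k)/implyP: H end;
  rewrite ?inE;
  repeat match goal with |- context [?x \in ?X] => case: (x \in X) end => //.

Section SubsetSums.
Variables (M : nmodType) (U : {fset nat}).

Lemma big_fpowerset_sub (S : {fset nat}) (g : {fset nat} -> M) : S `<=` U ->
  \sum_(R <- fpowerset S) g R = \sum_(R <- fpowerset U | R `<=` S) g R.
Proof.
move=> SU; rewrite -[RHS]big_filter; apply/perm_big/uniq_perm.
- exact: fset_uniq.
- by rewrite filter_uniq // fset_uniq.
move=> R; rewrite mem_filter !fpowersetE; case RS: (R `<=` S) => //=.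
by rewrite (fsubset_trans RS SU).
Qed.

Lemma big_fpowerset_sup (R : {fset nat}) (g : {fset nat} -> M) : R `<=` U ->
  \sum_(S <- fpowerset U | R `<=` S) g S = \sum_(Q <- fpowerset (U `\` R)) g (R `|` Q).
Proof.
move=> RU; rewrite -big_filter -(big_map (fsetU R) xpredT).
apply/perm_big/uniq_perm.
- by rewrite filter_uniq // fset_uniq.
- rewrite map_inj_in_uniq ?fset_uniq // => Q1 Q2; rewrite !fpowersetE => Q1R Q2R E.
  have -> : Q1 = (R `|` Q1) `\` R by fset_solve.
  by rewrite E; fset_solve.
move=> S; rewrite mem_filter fpowersetE; apply/andP/mapP => [[RS SU]|[Q]].
- by exists (S `\` R); [rewrite fpowersetE | ]; fset_solve.
- by rewrite fpowersetE => QU ->; split; fset_solve.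
Qed.

Lemma big_fpowerset_exchange (f : {fset nat} -> {fset nat} -> M) :
  \sum_(S <- fpowerset U) \sum_(R <- fpowerset S) f R S =
  \sum_(R <- fpowerset U) \sum_(Q <- fpowerset (U `\` R)) f R (R `|` Q).
Proof.
rewrite big_seq_cond.
under eq_bigr => S /andP[+ _] do rewrite fpowersetE => /big_fpowerset_sub ->.
rewrite -big_seq_cond (exchange_big_dep xpredT) //= big_seq_cond [RHS]big_seq_cond.
apply: eq_bigr => R /andP[+ _]; rewrite fpowersetE => RU.
by rewrite -big_fpowerset_sup //; apply: eq_bigl => S; rewrite andbC.
Qed.

End SubsetSums.

Section Bracket.
Variable R : pzRingType.
Implicit Types x y z : R.

Definition br x y := x * y - y * x.

Lemma brMl_comm x y z : GRing.comm y z -> br (x * z) y = br x y * z.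
Proof. by move=> yz; rewrite /br mulrBl -mulrA -yz !mulrA. Qed.

Lemma brMr_comm x y z : GRing.comm y z -> br y (x * z) = br y x * z.
Proof. by move=> yz; rewrite /br mulrBl !mulrA -[x * z * y]mulrA -yz mulrA. Qed.

Lemma br_br_swap a b d : GRing.comm d a -> br (br a b) d = br (br d b) a.
Proof.
move=> da; rewrite /br !mulrBl !mulrBr !mulrA da -!mulrA da !mulrA.
by rewrite !opprB addrACA [RHS]addrACA; congr (_ + _); exact: addrC.
Qed.

End Bracket.

Lemma expr_pchar_sum_eq0 (R : nzRingType) p (I : Type) (r : seq I) (v : I -> R) :
  p \in [pchar R] -> (forall i j, GRing.comm (v i) (v j)) -> (forall i, v i ^+ p = 0) ->
  (\sum_(i <- r) v i) ^+ p = 0.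
Proof.
move=> pR vv vp; elim: r => [|i r IH].
  by rewrite big_nil expr0n; case: p pR {vp} => // /andP[].
rewrite big_cons -(pFrobenius_autE pR) pFrobenius_autD_comm; last first.
  by apply: commr_sum => j _; apply: vv.
by rewrite !pFrobenius_autE IH vp addr0.
Qed.

HB.instance Definition _ (A : Type) := gen_eqMixin (tens A).
HB.instance Definition _ (A : Type) := gen_choiceMixin (tens A).

Section TensZmodule.
Variable A : zmodType.
Implicit Types x y z : tens A.

Definition tadd x y : tens A := fun U => x U + y U.
Definition topp x : tens A := fun U => - x U.

Lemma taddA : associative tadd.
Proof. by move=> x y z; apply: funext => U; rewrite /tadd addrA. Qed.
Lemma taddC : commutative tadd.
Proof. by move=> x y; apply: funext => U; rewrite /tadd addrC. Qed.
Lemma tadd0 : left_id (fun _ => 0) tadd.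
Proof. by move=> x; apply: funext => U; rewrite /tadd add0r. Qed.
Lemma taddN : left_inverse (fun _ => 0) topp tadd.
Proof. by move=> x; apply: funext => U; rewrite /tadd /topp addNr. Qed.

HB.instance Definition _ := GRing.isZmodule.Build (tens A) taddA taddC tadd0 taddN.

Lemma tens0E U : (0 : tens A) U = 0. Proof. by []. Qed.
Lemma tensDE x y U : (x + y) U = x U + y U. Proof. by []. Qed.
Lemma tensBE x y U : (x - y) U = x U - y U. Proof. by []. Qed.
Lemma tensMnE x n U : (x *+ n) U = x U *+ n.
Proof. by elim: n => [|n IH]; rewrite ?mulr0n // !mulrS tensDE IH. Qed.

Lemma tens_sumE (I : Type) (r : seq I) (P : pred I) (F : I -> tens A) U :
  (\sum_(i <- r | P i) F i) U = \sum_(i <- r | P i) F i U.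
Proof. by elim/big_rec2: _ => // i y z _ <-. Qed.

End TensZmodule.

(* The unitalisation A (x) (F1 + E) on tens A: e_fset0 is the adjoined unit
   and e_S e_T = e_(S `|` T) for disjoint S, T, 0 otherwise; [in_tA] cuts out
   A (x) E. *)
Section TensRing.
Variable A : nzRingType.
Implicit Types x y z : tens A.

Definition tconv x y : tens A := fun U => \sum_(S <- fpowerset U) x S * y (U `\` S).
Definition tunit : tens A := fun U => (U == fset0)%:R.

Lemma tconvA : associative tconv.
Proof.
move=> x y z; apply: funext => U; rewrite /tconv.
under eq_bigr => R _ do rewrite mulr_sumr.
under [RHS]eq_bigr => S _ do rewrite mulr_suml.
rewrite [RHS]big_fpowerset_exchange big_seq [RHS]big_seq.
apply: eq_bigr => R; rewrite fpowersetE => RU.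
rewrite big_seq [RHS]big_seq; apply: eq_bigr => Q; rewrite fpowersetE => QU.
rewrite mulrA fsetDDl; congr (_ * y _ * _); fset_solve.
Qed.

Lemma tconv1 : left_id tunit tconv.
Proof.
move=> x; apply: funext => U; rewrite /tconv (@big_seq_only _ _ _ fset0) ?fset_uniq //.
- by rewrite /tunit eqxx mul1r fsetD0.
- by rewrite fpowersetE fsub0set.
by move=> S _ /negbTE S0; rewrite /tunit S0 mul0r.
Qed.

Lemma tconvr1 : right_id tunit tconv.
Proof.
move=> x; apply: funext => U; rewrite /tconv (@big_seq_only _ _ _ U) ?fset_uniq //.
- by rewrite /tunit fsetDv eqxx mulr1.
- by rewrite fpowersetE fsubset_refl.
move=> S; rewrite fpowersetE /tunit fsetD_eq0 => SU SnU.
by rewrite (_ : U `<=` S = false) ?mulr0 //; apply: contraNF SnU; rewrite eqEfsubset SU.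
Qed.

Lemma tconvDl : left_distributive tconv +%R.
Proof.
move=> x y z; apply: funext => U; rewrite /tconv tensDE -big_split.
by apply: eq_bigr => S _; rewrite mulrDl.
Qed.

Lemma tconvDr : right_distributive tconv +%R.
Proof.
move=> x y z; apply: funext => U; rewrite /tconv tensDE -big_split.
by apply: eq_bigr => S _; rewrite mulrDr.
Qed.

Lemma tunit_neq0 : tunit != 0.
Proof. by apply/eqP => /(congr1 (@^~ fset0)) /eqP; rewrite /tunit eqxx oner_eq0. Qed.

HB.instance Definition _ := GRing.Zmodule_isNzRing.Build (tens A)
  tconvA tconv1 tconvr1 tconvDl tconvDr tunit_neq0.

Lemma tensME x y U : (x * y) U = \sum_(S <- fpowerset U) x S * y (U `\` S).
Proof. by []. Qed.

Lemma tens1E U : (1 : tens A) U = (U == fset0)%:R.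
Proof. by []. Qed.

Lemma br_fset0 x y : x fset0 = 0 -> br x y fset0 = 0.
Proof.
move=> x0; rewrite /br tensBE !tensME !big1_seq ?subr0 // => S /andP[_];
  by rewrite fpowersetE fsubset0 => /eqP->; rewrite fsetDv x0 ?mul0r ?mulr0.
Qed.

End TensRing.

Section Monomials.
Variable A : nzRingType.
Implicit Types (x y : tens A) (S T V : {fset nat}).

Definition emon T : tens A := fun V => if V == T then 1 else 0.
Definition tconst (c : A) : tens A := fun V => if V == fset0 then c else 0.

Lemma mul_emonE x T V : (x * emon T) V = if T `<=` V then x (V `\` T) else 0.
Proof.
rewrite tensME /emon; case: ifPn => TV.
  rewrite (@big_seq_only _ _ _ (V `\` T)) ?fset_uniq ?fpowersetE ?fsubDset ?fsubsetUr //.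
    by rewrite fsetDK // eqxx mulr1.
  move=> S; rewrite fpowersetE => SV SnVT; case: eqP => [VST|_]; last by rewrite mulr0.
  by move: SnVT; rewrite -VST fsetDK // eqxx.
rewrite big1_seq // => S /andP[_]; rewrite fpowersetE => SV.
by case: eqP => [VST|_]; [move: TV; rewrite -VST fsubDset fsubsetUr | rewrite mulr0].
Qed.

Lemma emon_mulE x T V : (emon T * x) V = if T `<=` V then x (V `\` T) else 0.
Proof.
rewrite tensME /emon; case: ifPn => TV.
  rewrite (@big_seq_only _ _ _ T) ?fset_uniq ?fpowersetE ?eqxx ?mul1r //.
  by move=> S _ /negbTE ->; rewrite mul0r.
rewrite big1_seq // => S /andP[_]; rewrite fpowersetE => SV.
by case: eqP => [ST|_]; [move: TV; rewrite -ST SV | rewrite mul0r].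
Qed.

Lemma emon_comm x T : GRing.comm x (emon T).
Proof. by apply: funext => V; rewrite mul_emonE emon_mulE. Qed.

Lemma br_mul_emonl x y T : br (x * emon T) y = br x y * emon T.
Proof. exact/brMl_comm/emon_comm. Qed.

Lemma br_mul_emonr x y T : br y (x * emon T) = br y x * emon T.
Proof. exact/brMr_comm/emon_comm. Qed.

Lemma mul_emon1_fset0 x k : (x * emon [fset k]) fset0 = 0.
Proof. by rewrite mul_emonE fsub1set inE. Qed.

Lemma comm_mul_emon x y S T : GRing.comm x y -> GRing.comm (x * emon S) (y * emon T).
Proof.
move=> xy; apply: commrM; last exact: emon_comm.
by apply/commr_sym/commrM; [exact/commr_sym | exact: emon_comm].
Qed.

Lemma emon_expr_eq0 T n : T != fset0 -> (1 < n)%N -> emon T ^+ n = 0.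
Proof.
case/fset0Pn=> k kT; case: n => [|[|n]] // _.
suff e2: emon T * emon T = 0 by rewrite -addn2 exprD expr2 e2 mulr0.
apply: funext => V; rewrite mul_emonE tens0E /emon.
by case: ifPn => // TV; case: eqP => // VT; move: (kT); rewrite -{1}VT inE kT.
Qed.

Lemma tconstME c x V : (tconst c * x) V = c * x V.
Proof.
rewrite tensME (@big_seq_only _ _ _ fset0) ?fset_uniq ?fpowersetE ?fsub0set //.
  by rewrite /tconst eqxx fsetD0.
by move=> S _ /negbTE S0; rewrite /tconst S0 mul0r.
Qed.

Lemma tconst0 : tconst 0 = 0.
Proof. by apply: funext => V; rewrite /tconst; case: ifP. Qed.

Lemma tens_sum_monomials (s : seq {fset nat}) x : uniq s ->
  (forall S, S \notin s -> x S = 0) -> x = \sum_(T <- s) tconst (x T) * emon T.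
Proof.
move=> us x0; apply: funext => V; rewrite tens_sumE.
under eq_bigr => T _ do rewrite tconstME /emon.
have [Vs|Vns] := boolP (V \in s).
  rewrite (big_seq_only us Vs) ?eqxx ?mulr1 // => T _ /negbTE TV.
  by rewrite eq_sym TV mulr0.
rewrite x0 // big1_seq // => T /andP[_ Ts].
by case: eqP => [VT|_]; [rewrite VT Ts in Vns | rewrite mulr0].
Qed.

Definition free_of (i : nat) x := forall V, i \in V -> x V = 0.

Lemma free_ofB i x y : free_of i x -> free_of i y -> free_of i (x - y).
Proof. by move=> x0 y0 V iV; rewrite tensBE x0 ?y0 ?subr0. Qed.

Lemma free_ofM i x y : free_of i x -> free_of i y -> free_of i (x * y).
Proof.
move=> x0 y0 V iV; rewrite tensME big1 // => S _.
have [iS|iS] := boolP (i \in S); first by rewrite x0 ?mul0r.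
by rewrite y0 ?mulr0 // inE iS.
Qed.

Lemma free_of_tconst i c : free_of i (tconst c).
Proof. by move=> V iV; rewrite /tconst; case: eqP => // V0; rewrite V0 in iV. Qed.

Lemma free_of_emon i T : i \notin T -> free_of i (emon T).
Proof. by move=> iT V iV; rewrite /emon; case: eqP => // VT; rewrite -VT iV in iT. Qed.

Lemma free_of_br i x y : free_of i x -> free_of i y -> free_of i (br x y).
Proof. by move=> xi yi; apply: free_ofB; apply: free_ofM. Qed.

Lemma mul_emon1_eq0 i x : free_of i x -> (x * emon [fset i] == 0) = (x == 0).
Proof.
move=> x0; apply/eqP/eqP => [xe0|->]; last exact: mul0r.
apply: funext => V; have [/x0 //|iV] := boolP (i \in V).
have := congr1 (@^~ (V `|` [fset i])) xe0.
rewrite mul_emonE fsubsetUr !tens0E => <-; congr x; apply/fsetP => k; rewrite !inE.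
by case: (eqVneq k i) => [->|]; rewrite ?(negbTE iV) ?orbF.
Qed.

Lemma exists_free_of (s : {fset {fset nat}}) (N : {fset nat}) x :
  (forall S, S \notin s -> x S = 0) -> exists2 i, i \notin N & free_of i x.
Proof.
move=> x0; pose M := N `|` \bigcup_(S <- s) S.
have iM : (\max_(k <- M) k).+1 \notin M.
  by apply/negP => /(@leq_bigmax_seq _ _ xpredT id) /(_ isT); rewrite ltnn.
exists (\max_(k <- M) k).+1 => [|V iV]; first by apply: contra iM; rewrite inE => ->.
apply: x0; apply: contra iM => Vs; rewrite inE orbC; apply/orP; left.
exact: fsubsetP (@bigfcup_sup _ _ s V xpredT id Vs isT) _ iV.
Qed.

End Monomials.
Arguments emon {A} T _.
Arguments tconst {A} c _.


Section Embedding.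
Variables (F : fieldType) (A : algType F).
Implicit Types x y : tens A.

Lemma tmul_fset0 x y : tmul x y fset0 = 0.
Proof.
rewrite /tmul big1_seq // => S /andP[/andP[S0 _]].
by rewrite fpowersetE fsubset0 (negbTE S0).
Qed.

(* [tmul] omits the terms S = fset0 and S = U of the convolution, which vanish here. *)
Lemma tmulE x y : x fset0 = 0 -> y fset0 = 0 -> tmul x y = x * y.
Proof.
move=> x0 y0; apply: funext => U; rewrite tensME /tmul big_mkcond.
apply: eq_bigr => S _; case: ifP => // /negbT; rewrite negb_and !negbK.
by case/orP => /eqP ->; rewrite ?x0 ?mul0r // fsetDv y0 mulr0.
Qed.

Lemma tbrE x y : x fset0 = 0 -> y fset0 = 0 -> tbr x y = br x y.
Proof. by move=> x0 y0; rewrite /tbr !tmulE. Qed.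

Lemma tbr_fset0 x y : tbr x y fset0 = 0.
Proof. by rewrite /tbr /tsub !tmul_fset0 subr0. Qed.

Lemma texpSE x n : x fset0 = 0 -> texpS x n = x ^+ n.+1.
Proof.
move=> x0; elim: n => [|n IH] //=.
have xn0 : texpS x n fset0 = 0 by case: n {IH} => //= n; rewrite tmul_fset0.
by rewrite tmulE // IH [RHS]exprS.
Qed.

Lemma pchar_tens p : p \in [pchar F] -> p \in [pchar (tens A)].
Proof.
move=> pF; rewrite inE (pcharf_prime pF); apply/eqP/funext => V.
rewrite tensMnE tens1E tens0E; case: (V == fset0); rewrite ?mulr0n ?mul0rn //.
by rewrite mulr1n -scaler_nat (pcharf0 pF) scale0r.
Qed.

Lemma in_tL_tconst_emon1 (L : {pred A}) c k : 0 \in L -> c \in L ->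
  in_tL L (tconst c * emon [fset k]).
Proof.
have ceE V : (tconst c * emon [fset k]) V = if V == [fset k] then c else 0.
  by rewrite tconstME /emon; case: ifP; rewrite ?mulr1 ?mulr0.
move=> L0 cL; split; [split|] => [||S]; rewrite ?ceE //.
- by case: eqP => // /fsetP/(_ k); rewrite !inE eqxx.
- by exists [fset [fset k]] => S; rewrite inE ceE => /negbTE ->.
- by case: ifP.
Qed.

End Embedding.

Section Sandwich.
Variables (F : fieldType) (A : algType F) (L : {pred A}) (a : tens A).
Hypotheses (L0 : 0 \in L) (aL : in_tL L a) (a_sw : tsandwich L a).

Let a0 : a fset0 = 0. Proof. by case: aL => [[]]. Qed.

Let a_fin : exists s : {fset {fset nat}}, forall S, S \notin s -> a S = 0.
Proof. by case: aL => [[]]. Qed.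

(* Test ad(a)^2 = 0 on c e_i with e_i a generator not occurring in a, then cancel e_i. *)
Lemma sandwich_tconst_br_comm c : c \in L -> GRing.comm (br (tconst c) a) a.
Proof.
move=> cL; have [s as0] := a_fin; have [i _ ai] := exists_free_of fset0 as0.
have /funext/eqP := a_sw.1 _ (in_tL_tconst_emon1 i L0 cL).
rewrite !tbrE ?br_fset0 ?mul_emon1_fset0 // !br_mul_emonl.
rewrite mul_emon1_eq0 => [/eqP/subr0_eq //|].
by apply: free_of_br (ai); apply: free_of_br (free_of_tconst c) ai.
Qed.

(* Test ad(a) ad(d e_j) ad(a) = 0 on c e_i for distinct generators i, j not occurring in a. *)
Lemma sandwich_tconst_br3_eq0 c d : c \in L -> d \in L ->
  br (br (br (tconst c) a) (tconst d)) a = 0.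
Proof.
move=> cL dL; have [s as0] := a_fin.
have [i _ ai] := exists_free_of fset0 as0; have [j ji aj] := exists_free_of [fset i] as0.
have /funext/eqP := a_sw.2 _ _ (in_tL_tconst_emon1 j L0 dL) (in_tL_tconst_emon1 i L0 cL).
rewrite !tbrE ?br_fset0 ?mul_emon1_fset0 // br_mul_emonl br_mul_emonr !br_mul_emonl.
have free_of_lhs k : free_of k a -> free_of k (br (br (br (tconst c) a) (tconst d)) a).
  move=> ak; apply: free_of_br (ak); apply: free_of_br (free_of_tconst d).
  exact: free_of_br (free_of_tconst c) ak.
rewrite mul_emon1_eq0 ?mul_emon1_eq0 => [/eqP //||];
  by [exact: free_of_lhs | apply: free_ofM; [exact: free_of_lhs | exact: free_of_emon]].
Qed.

Lemma sandwich_comm_br_tconst c d : c \in L -> d \in L ->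
  GRing.comm (br a (tconst c)) (br a (tconst d)).
Proof.
move=> cL dL; have := br_br_swap (tconst c) (sandwich_tconst_br_comm dL).
rewrite sandwich_tconst_br3_eq0 // => /subr0_eq/commrN.
by rewrite [br (tconst d) a]/br -opprB opprK.
Qed.

Theorem sandwich_br_expr_pchar_eq0 p b : p \in [pchar F] -> in_tL L b -> br a b ^+ p = 0.
Proof.
move=> pF [[b0 [s bs0]] bL]; have p_gt1 := prime_gt1 (pcharf_prime pF).
have -> : br a b = \sum_(T <- s) br a (tconst (b T)) * emon T.
  rewrite {1}(tens_sum_monomials (fset_uniq s) bs0) /br mulr_sumr mulr_suml -sumrB.
  by apply: eq_bigr => T _; rewrite -br_mul_emonr.
apply: (expr_pchar_sum_eq0 s (pchar_tens A pF)) => [T T'|T].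
  by apply: comm_mul_emon; apply: sandwich_comm_br_tconst.
have [->|T0] := eqVneq T fset0.
  by rewrite b0 tconst0 /br mulr0 mul0r subr0 mul0r expr0n; case: p p_gt1 {pF}.
by rewrite exprMn_comm ?emon_expr_eq0 ?mulr0 //; apply: emon_comm.
Qed.

End Sandwich.

Theorem lemma22 (F : fieldType) (p : nat) (hp : (p \in [pchar F])%R)
  (A : algType F) (L : {pred A}) (hL : lie_subalg L)
  (a : tens A) (ha : in_tL L a) (hsw : tsandwich L a)
  (b : tens A) (hb : in_tL L b) :
  tis0 (texpS (tbr a b) p.-1).
Proof.
have L0 : 0 \in L by case: hL => [[]].
have a0 : a fset0 = 0 by case: ha => [[]].
have b0 : b fset0 = 0 by case: hb => [[]].
rewrite texpSE ?tbr_fset0 // prednK ?prime_gt0 ?(pcharf_prime hp) // tbrE //.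
by rewrite (sandwich_br_expr_pchar_eq0 L0 ha hsw hp hb).
Qed.
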